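(* Let $A,B,C,D$ be smooth real functions on an open subset of $\mathbb R^4$ with coordinates $(x_0,x_1,x_2,x_3)$, $\partial_i=\partial/\partial x_i$, and let $h$ be the $H$-valued map $h=\begin{pmatrix}1&A&B&D\\0&1&A&C\\0&0&1&A\\0&0&0&1\end{pmatrix}$. Let $(V_0,V_1,V_2,V_3)$ be the framing dual to the coframing $h\,\mathrm dx$, explicitly $$V_0=\partial_0,\quad V_1=\partial_1-A\partial_0,\quad V_2=\partial_2-A\partial_1-(B-A^2)\partial_0,$$ $$V_3=\partial_3-A\partial_2-(C-A^2)\partial_1-(D-(C+B)A+A^3)\partial_0.$$ Then the $\mathrm{GL}(2)$-structure containing the coframing $h\,\mathrm dx$ is torsion-free if and only if $$\begin{aligned} &V_2(D)-V_3(B)-AV_2(B)-CV_2(A)+AV_3(A)+A^2V_2(A)=0,\\ &2V_1(D)-V_2(C)-2AV_1(B)-V_3(A)+AV_2(A)+2A^2V_1(A)-2CV_1(A)=0,\\ &V_0(D)-2V_1(C)+3V_1(B)-AV_0(B)-2V_2(A)-AV_1(A)-CV_0(A)+A^2V_0(A)=0,\\ &V_0(C)-2V_0(B)+V_1(A)+AV_0(A)=0. \end{aligned}$$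
   Context: $\mathcal V_3$ is the space of real binary cubic forms in $x,y$ with the linear-substitution action of $\mathrm{GL}(2,\mathbb R)$; $G_3\subset\mathrm{GL}(\mathcal V_3)$ is its image, and $\mathcal V_3\cong\mathbb R^4$ via $x^{3-i}y^i\mapsto e_{i+1}$. A $\mathrm{GL}(2)$-structure is a $G_3$-structure (reduction of the coframe bundle, coframes valued in $\mathbb R^4$, to $G_3$); the $\mathrm{GL}(2)$-structure containing a coframing $\eta$ is the one whose fibre at each point is the $G_3$-orbit of $\eta$. It is torsion-free if there is a principal $G_3$-connection $\theta$ with $\mathrm d\omega=-\theta\wedge\omega$ for the tautological form $\omega$. *)

From Stdlib Require Import Reals Lra Lia ClassicalEpsilon List.
Import ListNotations.
Open Scope R_scope.

Definition pt : Type := (R * R * R * R)%type.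

Definition coord (p : pt) (i : nat) : R :=
  match p with (x0, x1, x2, x3) =>
    match i with 0%nat => x0 | 1%nat => x1 | 2%nat => x2 | _ => x3 end end.

Definition upd (p : pt) (i : nat) (t : R) : pt :=
  match p with (x0, x1, x2, x3) =>
    match i with
    | 0%nat => (t, x1, x2, x3)
    | 1%nat => (x0, t, x2, x3)
    | 2%nat => (x0, x1, t, x3)
    | _ => (x0, x1, x2, t) end end.

Definition near (q p : pt) (eps : R) : Prop :=
  forall i, (i < 4)%nat -> Rabs (coord q i - coord p i) < eps.

Definition is_open (U : pt -> Prop) : Prop :=
  forall p, U p -> exists eps, 0 < eps /\ forall q, near q p eps -> U q.

Definition cont_on (U : pt -> Prop) (f : pt -> R) : Prop :=
  forall p, U p -> forall e, 0 < e ->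
    exists d, 0 < d /\ forall q, U q -> near q p d -> Rabs (f q - f p) < e.

(** Smooth (C^infinity) on U: there is a family F of functions, indexed by
    lists of coordinate directions, with F [] = f on U, F (i :: l) the i-th
    partial derivative of F l on U, and all F l continuous on U. *)
Definition smooth_on (U : pt -> Prop) (f : pt -> R) : Prop :=
  exists F : list nat -> pt -> R,
    (forall p, U p -> F nil p = f p) /\
    (forall l i p, (i < 4)%nat -> U p ->
        derivable_pt_lim (fun t => F l (upd p i t)) (coord p i) (F (i :: l) p)) /\
    (forall l, cont_on U (F l)).

(** Partial derivative d f / d x_i at p (the value of the derivative when it
    exists; chosen by classical description, unique by uniqueness of limits). *)
Definition pd (i : nat) (f : pt -> R) (p : pt) : R :=
  epsilon (inhabits 0) (fun l => derivable_pt_lim (fun t => f (upd p i t)) (coord p i) l).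

Definition sum4 (f : nat -> R) : R := f 0%nat + f 1%nat + f 2%nat + f 3%nat.

(** The matrix h (entries h a b, rows a, columns b, 0-indexed). *)
Definition hmat (A B C D : pt -> R) (a b : nat) (p : pt) : R :=
  match a, b with
  | 0%nat, 0%nat => 1 | 0%nat, 1%nat => A p | 0%nat, 2%nat => B p | 0%nat, 3%nat => D p
  | 1%nat, 1%nat => 1 | 1%nat, 2%nat => A p | 1%nat, 3%nat => C p
  | 2%nat, 2%nat => 1 | 2%nat, 3%nat => A p
  | 3%nat, 3%nat => 1
  | _, _ => 0 end.

(** Basis of the Lie algebra g_3 of G_3 in gl(V_3) = gl(4,R), w.r.t. the basis
    e_{i+1} = x^{3-i} y^i; these are the derivations y d/dx, x d/dy, x d/dx,
    y d/dy (the infinitesimal linear substitutions).  Entry (a,b) is the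
    e_{a+1}-coefficient of the image of e_{b+1}. *)
Definition g3basis (k a b : nat) : R :=
  match k with
  | 0%nat =>
      match a, b with 1%nat, 0%nat => 3 | 2%nat, 1%nat => 2 | 3%nat, 2%nat => 1 | _, _ => 0 end
  | 1%nat =>
      match a, b with 0%nat, 1%nat => 1 | 1%nat, 2%nat => 2 | 2%nat, 3%nat => 3 | _, _ => 0 end
  | 2%nat =>
      match a, b with 0%nat, 0%nat => 3 | 1%nat, 1%nat => 2 | 2%nat, 2%nat => 1 | _, _ => 0 end
  | _ =>
      match a, b with 1%nat, 1%nat => 1 | 2%nat, 2%nat => 2 | 3%nat, 3%nat => 3 | _, _ => 0 end
  end.

(** The GL(2)-structure containing the coframing eta^a = sum_b h a b dx^b on U
    is torsion-free: there is a smooth g_3-valued 1-form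
    theta = sum_{k,c} t k c (x) g3basis k dx^c on U with
    d eta = - theta /\ eta. *)
Definition torsion_free (U : pt -> Prop) (h : nat -> nat -> pt -> R) : Prop :=
  exists t : nat -> nat -> pt -> R,
    (forall k c, (k < 4)%nat -> (c < 4)%nat -> smooth_on U (t k c)) /\
    let theta a b c p := sum4 (fun k => t k c p * g3basis k a b) in
    forall p, U p -> forall a c d, (a < 4)%nat -> (c < d)%nat -> (d < 4)%nat ->
      pd c (h a d) p - pd d (h a c) p =
      - sum4 (fun b => theta a b c p * h b d p - theta a b d p * h b c p).

Definition Vf (A B C D : pt -> R) (j : nat) (f : pt -> R) (p : pt) : R :=
  match j with
  | 0%nat => pd 0 f p
  | 1%nat => pd 1 f p - A p * pd 0 f p
  | 2%nat => pd 2 f p - A p * pd 1 f p - (B p - A p ^ 2) * pd 0 f p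
  | _ => pd 3 f p - A p * pd 2 f p - (C p - A p ^ 2) * pd 1 f p
          - (D p - (C p + B p) * A p + A p ^ 3) * pd 0 f p
  end.

From Stdlib Require Import Reals Lra Lia ClassicalEpsilon List.
Import ListNotations.
Open Scope R_scope.

(** A torsion-free connection θ must satisfy [dη = -θ ∧ η]; evaluated on pairs of
    frame vectors [(V_i, V_j)], the θ-term only involves the [g_3]-valued components
    [θ(V_i)], and four fixed linear combinations of these frame components cancel it
    for every θ.  For this [h] these combinations of [dη(V_i, V_j)] are the four
    stated expressions, which therefore vanish.  Conversely, the connection whose
    components [θ(V_i)] are the explicit linear expressions [frame_connection] in
    [A] and the derivatives [V_i(A)], [V_i(B)], [V_i(C)] removes all of [dη + θ ∧ η]
    except exactly these four combinations; it is smooth because smooth functions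
    are closed under sums, products and partial derivatives. *)

Lemma upd_coord p i : upd p i (coord p i) = p.
Proof. destruct p as [[[x0 x1] x2] x3]; destruct i as [|[|[|[|i]]]]; reflexivity. Qed.

Lemma near_upd p i t eps : (i < 4)%nat -> 0 < eps -> Rabs (t - coord p i) < eps ->
  near (upd p i t) p eps.
Proof.
  intros Hi He Ht j Hj. destruct p as [[[x0 x1] x2] x3].
  destruct i as [|[|[|[|i]]]]; try lia; destruct j as [|[|[|[|j]]]]; try lia; simpl in *;
    solve [exact Ht | rewrite Rminus_diag, Rabs_R0; exact He].
Qed.

Lemma near_weaken q p d1 d2 : d1 <= d2 -> near q p d1 -> near q p d2.
Proof. intros Hd H i Hi. specialize (H i Hi). lra. Qed.

Lemma pd_of_derivable i f p l :
  derivable_pt_lim (fun t => f (upd p i t)) (coord p i) l -> pd i f p = l.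
Proof.
  intro H. unfold pd.
  apply (uniqueness_limite (fun t => f (upd p i t)) (coord p i)); [|exact H].
  exact (epsilon_spec (inhabits 0) _ (ex_intro _ l H)).
Qed.

Lemma pd_const i k p : pd i (fun _ => k) p = 0.
Proof. apply pd_of_derivable, derivable_pt_lim_const. Qed.

Lemma pd_of_derivable_on U f g i p l : is_open U -> (i < 4)%nat -> U p ->
  (forall q, U q -> f q = g q) ->
  derivable_pt_lim (fun t => f (upd p i t)) (coord p i) l -> pd i g p = l.
Proof.
  intros HU Hi Hp Hfg Hf. apply pd_of_derivable.
  destruct (HU p Hp) as [eps [He Hn]].
  apply (derivable_pt_lim_locally_ext (fun t => f (upd p i t)) _ (coord p i)
           (coord p i - eps) (coord p i + eps)); [lra | | exact Hf].
  intros z Hz. apply Hfg, Hn, near_upd; [exact Hi | exact He |].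
  apply Rabs_def1; lra.
Qed.

Lemma cont_on_const U k : cont_on U (fun _ => k).
Proof.
  intros p _ e He. exists 1. split; [lra|].
  intros. rewrite Rminus_diag, Rabs_R0. exact He.
Qed.

Lemma cont_on_plus U f g : cont_on U f -> cont_on U g -> cont_on U (fun p => f p + g p).
Proof.
  intros Hf Hg p Hp e He.
  destruct (Hf p Hp (e / 2)) as [d1 [Hd1 H1]]; [lra|].
  destruct (Hg p Hp (e / 2)) as [d2 [Hd2 H2]]; [lra|].
  exists (Rmin d1 d2). split; [now apply Rmin_pos|].
  intros q Hq Hn.
  specialize (H1 q Hq (near_weaken _ _ _ _ (Rmin_l _ _) Hn)).
  specialize (H2 q Hq (near_weaken _ _ _ _ (Rmin_r _ _) Hn)).
  replace (f q + g q - (f p + g p)) with ((f q - f p) + (g q - g p)) by ring.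
  pose proof (Rabs_triang (f q - f p) (g q - g p)). lra.
Qed.

Lemma cont_on_mult U f g : cont_on U f -> cont_on U g -> cont_on U (fun p => f p * g p).
Proof.
  intros Hf Hg p Hp e He.
  set (K := 1 + Rabs (f p) + Rabs (g p)).
  assert (HK : 1 <= K) by (unfold K; pose proof (Rabs_pos (f p)); pose proof (Rabs_pos (g p)); lra).
  set (e' := Rmin 1 (e / K)).
  assert (He'pos : 0 < e') by (apply Rmin_pos; [lra | apply Rdiv_lt_0_compat; lra]).
  assert (He'1 : e' <= 1) by apply Rmin_l.
  assert (He'K : e' * K <= e).
  { apply Rle_trans with (e / K * K); [apply Rmult_le_compat_r; [lra | apply Rmin_r]|].
    field_simplify; lra. }
  destruct (Hf p Hp e' He'pos) as [d1 [Hd1 H1]].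
  destruct (Hg p Hp e' He'pos) as [d2 [Hd2 H2]].
  exists (Rmin d1 d2). split; [now apply Rmin_pos|].
  intros q Hq Hn.
  specialize (H1 q Hq (near_weaken _ _ _ _ (Rmin_l _ _) Hn)).
  specialize (H2 q Hq (near_weaken _ _ _ _ (Rmin_r _ _) Hn)).
  replace (f q * g q - f p * g p) with
    ((f q - f p) * (g q - g p) + (f q - f p) * g p + f p * (g q - g p)) by ring.
  pose proof (Rabs_triang ((f q - f p) * (g q - g p) + (f q - f p) * g p) (f p * (g q - g p))).
  pose proof (Rabs_triang ((f q - f p) * (g q - g p)) ((f q - f p) * g p)).
  rewrite !Rabs_mult in *.
  pose proof (Rabs_pos (f q - f p)); pose proof (Rabs_pos (g q - g p)).
  pose proof (Rabs_pos (f p)); pose proof (Rabs_pos (g p)).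
  unfold K in He'K. nra.
Qed.

(** The product rule iterated along a word [l] of directions: each direction in
    [l] falls either on the first or on the second factor. *)
Fixpoint leibniz_splits (l : list nat) : list (list nat * list nat) :=
  match l with
  | [] => [([], [])]
  | i :: l' => flat_map (fun s => [(i :: fst s, snd s); (fst s, i :: snd s)]) (leibniz_splits l')
  end.

Definition leibniz_sum (F G : list nat -> pt -> R) (L : list (list nat * list nat)) (p : pt) : R :=
  fold_right (fun s acc => F (fst s) p * G (snd s) p + acc) 0 L.

Lemma leibniz_sum_derivable F G i p L :
  (forall l, derivable_pt_lim (fun t => F l (upd p i t)) (coord p i) (F (i :: l) p)) ->
  (forall l, derivable_pt_lim (fun t => G l (upd p i t)) (coord p i) (G (i :: l) p)) ->
  derivable_pt_lim (fun t => leibniz_sum F G L (upd p i t)) (coord p i)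
    (leibniz_sum F G (flat_map (fun s => [(i :: fst s, snd s); (fst s, i :: snd s)]) L) p).
Proof.
  intros HF HG. induction L as [|[l1 l2] L IH]; [apply derivable_pt_lim_const|].
  replace (leibniz_sum F G (flat_map _ ((l1, l2) :: L)) p) with
    ((F (i :: l1) p * G l2 p + F l1 p * G (i :: l2) p)
     + leibniz_sum F G (flat_map (fun s => [(i :: fst s, snd s); (fst s, i :: snd s)]) L) p)
    by (unfold leibniz_sum; simpl; ring).
  apply (derivable_pt_lim_plus (fun t => F l1 (upd p i t) * G l2 (upd p i t))
           (fun t => leibniz_sum F G L (upd p i t))); [|exact IH].
  pose proof (derivable_pt_lim_mult _ _ _ _ _ (HF l1) (HG l2)) as Hmult.
  simpl in Hmult. rewrite upd_coord in Hmult. exact Hmult.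
Qed.

Lemma leibniz_sum_cont U F G L :
  (forall l, cont_on U (F l)) -> (forall l, cont_on U (G l)) -> cont_on U (leibniz_sum F G L).
Proof.
  intros HF HG. induction L as [|[l1 l2] L IH]; [apply cont_on_const|].
  apply (cont_on_plus U (fun p => F l1 p * G l2 p)); [apply cont_on_mult|]; auto.
Qed.

Section Smooth.

Variable U : pt -> Prop.

Lemma smooth_on_ext f g : (forall p, U p -> f p = g p) -> smooth_on U f -> smooth_on U g.
Proof.
  intros Hfg [F [HF0 HF]]. exists F. split; [|exact HF].
  intros p Hp. rewrite HF0, Hfg by exact Hp. reflexivity.
Qed.

Lemma smooth_on_const k : smooth_on U (fun _ => k).
Proof.
  exists (fun l => match l with [] => fun _ => k | _ => fun _ => 0 end).
  split; [reflexivity|]. split.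
  - intros [|j l] i p _ _; apply derivable_pt_lim_const.
  - intros [|j l]; apply cont_on_const.
Qed.

Lemma smooth_on_plus f g : smooth_on U f -> smooth_on U g -> smooth_on U (fun p => f p + g p).
Proof.
  intros [F [HF0 [HF1 HF2]]] [G [HG0 [HG1 HG2]]].
  exists (fun l p => F l p + G l p). split; [|split].
  - intros p Hp. rewrite HF0, HG0 by exact Hp. reflexivity.
  - intros l i p Hi Hp.
    exact (derivable_pt_lim_plus (fun t => F l (upd p i t)) (fun t => G l (upd p i t)) _ _ _
             (HF1 l i p Hi Hp) (HG1 l i p Hi Hp)).
  - intro l. apply cont_on_plus; auto.
Qed.

Lemma smooth_on_mult f g : smooth_on U f -> smooth_on U g -> smooth_on U (fun p => f p * g p).
Proof.
  intros [F [HF0 [HF1 HF2]]] [G [HG0 [HG1 HG2]]].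
  exists (fun l => leibniz_sum F G (leibniz_splits l)). split; [|split].
  - intros p Hp. unfold leibniz_sum. simpl. rewrite HF0, HG0 by exact Hp. ring.
  - intros l i p Hi Hp. apply leibniz_sum_derivable; auto.
  - intro l. apply leibniz_sum_cont; auto.
Qed.

Lemma smooth_on_opp f : smooth_on U f -> smooth_on U (fun p => - f p).
Proof.
  intro Hf. apply (smooth_on_ext (fun p => -1 * f p)); [intros; ring|].
  apply smooth_on_mult; [apply smooth_on_const | exact Hf].
Qed.

Lemma smooth_on_minus f g : smooth_on U f -> smooth_on U g -> smooth_on U (fun p => f p - g p).
Proof. intros Hf Hg. apply smooth_on_plus; [exact Hf | now apply smooth_on_opp]. Qed.

Lemma smooth_on_pow f n : smooth_on U f -> smooth_on U (fun p => f p ^ n).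
Proof.
  intro Hf. induction n as [|n IH]; [exact (smooth_on_const 1)|].
  exact (smooth_on_mult _ _ Hf IH).
Qed.

Lemma smooth_on_sum4 (F : nat -> pt -> R) :
  (forall i, smooth_on U (F i)) -> smooth_on U (fun p => sum4 (fun i => F i p)).
Proof.
  intro HF. unfold sum4.
  repeat apply smooth_on_plus; apply HF.
Qed.

Hypothesis U_open : is_open U.

(** On the open set [U], [pd i f = F [i]], so [F (l ++ [i])] is a derivative family
    for [pd i f]. *)
Lemma smooth_on_pd f i : (i < 4)%nat -> smooth_on U f -> smooth_on U (pd i f).
Proof.
  intros Hi [F [HF0 [HF1 HF2]]].
  exists (fun l => F (l ++ [i])). split; [|split].
  - intros p Hp. symmetry. apply (pd_of_derivable_on U (F [])); auto.
  - intros l j p Hj Hp. apply HF1; auto.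
  - intro l. apply HF2.
Qed.

End Smooth.

Lemma sum4_eq0 (f : nat -> R) : (forall i, (i < 4)%nat -> f i = 0) -> sum4 f = 0.
Proof. intro H. unfold sum4. rewrite !H by lia. ring. Qed.

(** The four expressions of the theorem at a point, [VX j] standing for [V_j(X)]. *)
Definition intrinsic_torsion1 (A C : R) (VA VB VD : nat -> R) : R :=
  VD 2%nat - VB 3%nat - A * VB 2%nat - C * VA 2%nat + A * VA 3%nat + A ^ 2 * VA 2%nat.
Definition intrinsic_torsion2 (A C : R) (VA VB VC VD : nat -> R) : R :=
  2 * VD 1%nat - VC 2%nat - 2 * A * VB 1%nat - VA 3%nat + A * VA 2%nat
    + 2 * A ^ 2 * VA 1%nat - 2 * C * VA 1%nat.
Definition intrinsic_torsion3 (A C : R) (VA VB VC VD : nat -> R) : R :=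
  VD 0%nat - 2 * VC 1%nat + 3 * VB 1%nat - A * VB 0%nat - 2 * VA 2%nat
    - A * VA 1%nat - C * VA 0%nat + A ^ 2 * VA 0%nat.
Definition intrinsic_torsion4 (A : R) (VA VB VC : nat -> R) : R :=
  VC 0%nat - 2 * VB 0%nat + VA 1%nat + A * VA 0%nat.

Definition intrinsic_torsion_vanishes (A C : R) (VA VB VC VD : nat -> R) : Prop :=
  intrinsic_torsion1 A C VA VB VD = 0 /\ intrinsic_torsion2 A C VA VB VC VD = 0 /\
  intrinsic_torsion3 A C VA VB VC VD = 0 /\ intrinsic_torsion4 A VA VB VC = 0.

(** A representative of the part of [dη + θ ∧ η] that no connection can remove,
    by its components on [η^i ∧ η^j]. *)
Definition intrinsic_form (t1 t2 t3 t4 : R) (a i j : nat) : R :=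
  match a, i, j with
  | 0%nat, 2%nat, 3%nat => t1 | 0%nat, 3%nat, 2%nat => - t1
  | 0%nat, 1%nat, 3%nat => t2 / 2 | 0%nat, 3%nat, 1%nat => - (t2 / 2)
  | 0%nat, 0%nat, 3%nat => t3 | 0%nat, 3%nat, 0%nat => - t3
  | 0%nat, 0%nat, 2%nat => - (t4 / 2) | 0%nat, 2%nat, 0%nat => t4 / 2
  | _, _, _ => 0
  end.

Lemma intrinsic_form0 a i j : intrinsic_form 0 0 0 0 a i j = 0.
Proof.
  destruct a as [|a]; [|reflexivity].
  destruct i as [|[|[|[|i]]]]; destruct j as [|[|[|[|j]]]]; simpl; lra.
Qed.

(** Components [θ(V_i) = Σ_k frame_connection k i e_k] (with [e_k = g3basis k]),
    obtained by solving the linear system [frame_torsion = intrinsic_form]. *)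
Definition frame_connection (A : R) (VA VB VC : nat -> R) (k i : nat) : R :=
  match k, i with
  | 0%nat, 2%nat => VA 0%nat / 9
  | 0%nat, 3%nat => (VC 0%nat - A * VA 0%nat) / 3
  | 1%nat, 0%nat => - VA 0%nat / 3
  | 1%nat, 1%nat => (2 * VC 0%nat - 2 * A * VA 0%nat - 3 * VA 1%nat) / 9
  | 1%nat, 2%nat => VB 1%nat - VA 2%nat - A * VA 1%nat
  | 1%nat, 3%nat => (VC 2%nat - VA 3%nat - A * VA 2%nat) / 2
  | 2%nat, 1%nat => 2 * VA 0%nat / 9
  | 2%nat, 2%nat => (VC 0%nat + VA 1%nat - A * VA 0%nat) / 6
  | 2%nat, 3%nat => (2 * VC 1%nat + 2 * VA 2%nat + A * VA 1%nat) / 3 - VB 1%nat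
  | 3%nat, 2%nat => (VC 0%nat - A * VA 0%nat) / 9
  | 3%nat, 3%nat => 2 * VB 1%nat - (VC 1%nat + 4 * VA 2%nat + 5 * A * VA 1%nat) / 3
  | _, _ => 0
  end.

Section Pointwise.

Variables (A B C D : R) (dA dB dC dD : nat -> R).

Definition hval (a b : nat) : R :=
  match a, b with
  | 0%nat, 0%nat => 1 | 0%nat, 1%nat => A | 0%nat, 2%nat => B | 0%nat, 3%nat => D
  | 1%nat, 1%nat => 1 | 1%nat, 2%nat => A | 1%nat, 3%nat => C
  | 2%nat, 2%nat => 1 | 2%nat, 3%nat => A
  | 3%nat, 3%nat => 1
  | _, _ => 0
  end.

Definition dhval (c a b : nat) : R :=
  match a, b with
  | 0%nat, 1%nat => dA c | 0%nat, 2%nat => dB c | 0%nat, 3%nat => dD c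
  | 1%nat, 2%nat => dA c | 1%nat, 3%nat => dC c
  | 2%nat, 3%nat => dA c
  | _, _ => 0
  end.

(** The value on [V_j] of the 1-form with coordinate components [v]. *)
Definition frame_comp (v : nat -> R) (j : nat) : R :=
  match j with
  | 0%nat => v 0%nat
  | 1%nat => v 1%nat - A * v 0%nat
  | 2%nat => v 2%nat - A * v 1%nat - (B - A ^ 2) * v 0%nat
  | _ => v 3%nat - A * v 2%nat - (C - A ^ 2) * v 1%nat
          - (D - (C + B) * A + A ^ 3) * v 0%nat
  end.

(** Coordinate components of [dη + θ ∧ η] on [dx^c ∧ dx^d], where
    [θ(∂_c) = Σ_k t k c e_k]; [hval] and [dhval c] are [h] and [∂_c h] at the point. *)
Definition torsion (t : nat -> nat -> R) (a c d : nat) : R :=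
  let theta b e := sum4 (fun k => t k e * g3basis k a b) in
  dhval c a d - dhval d a c + sum4 (fun b => theta b c * hval b d - theta b d * hval b c).

Definition frame_torsion (t : nat -> nat -> R) (a i j : nat) : R :=
  frame_comp (fun c => frame_comp (fun d => torsion t a c d) j) i.

Local Notation VA := (frame_comp dA).
Local Notation VB := (frame_comp dB).
Local Notation VC := (frame_comp dC).
Local Notation VD := (frame_comp dD).

Lemma torsion_antisym t a c d : torsion t a c d = - torsion t a d c.
Proof. unfold torsion, sum4. ring. Qed.

Lemma frame_comp_eq0 v j : (forall c, (c < 4)%nat -> v c = 0) -> frame_comp v j = 0.
Proof.
  intro Hv. unfold frame_comp.
  destruct j as [|[|[|j]]]; rewrite ?(Hv 0%nat), ?(Hv 1%nat), ?(Hv 2%nat), ?(Hv 3%nat) by lia; ring.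
Qed.

Lemma frame_torsion_eq0 t a i j :
  (forall c d, (c < d)%nat -> (d < 4)%nat -> torsion t a c d = 0) ->
  frame_torsion t a i j = 0.
Proof.
  intro Ht.
  assert (Hall : forall c d, (c < 4)%nat -> (d < 4)%nat -> torsion t a c d = 0).
  { intros c d Hc Hd.
    destruct (Nat.lt_trichotomy c d) as [Hlt | [-> | Hgt]].
    - exact (Ht c d Hlt Hd).
    - pose proof (torsion_antisym t a d d). lra.
    - rewrite torsion_antisym, (Ht d c Hgt Hc). ring. }
  apply frame_comp_eq0. intros c Hc. apply frame_comp_eq0. intros d Hd. exact (Hall c d Hc Hd).
Qed.

(** The θ-terms cancel in these combinations of frame components, for every [t]. *)
Lemma intrinsic_torsion_frame t :
  intrinsic_torsion1 A C VA VB VD = frame_torsion t 0 2 3 /\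
  intrinsic_torsion2 A C VA VB VC VD = 2 * frame_torsion t 0 1 3 - frame_torsion t 1 2 3 /\
  intrinsic_torsion3 A C VA VB VC VD =
    frame_torsion t 0 0 3 + 3 * frame_torsion t 0 1 2 - 2 * frame_torsion t 1 1 3
    + frame_torsion t 2 2 3 /\
  intrinsic_torsion4 A VA VB VC =
    - 2 * frame_torsion t 0 0 2 + frame_torsion t 1 0 3 + 3 * frame_torsion t 1 1 2
    - 2 * frame_torsion t 2 1 3 + frame_torsion t 3 2 3.
Proof.
  unfold intrinsic_torsion1, intrinsic_torsion2, intrinsic_torsion3, intrinsic_torsion4,
    frame_torsion, frame_comp, torsion, dhval, hval, sum4, g3basis.
  repeat split; ring.
Qed.

Lemma intrinsic_torsion_vanishes_of_torsion0 t :
  (forall a c d, (a < 4)%nat -> (c < d)%nat -> (d < 4)%nat -> torsion t a c d = 0) ->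
  intrinsic_torsion_vanishes A C VA VB VC VD.
Proof.
  intro Ht.
  assert (H0 : forall a i j, (a < 4)%nat -> frame_torsion t a i j = 0).
  { intros a i j Ha. apply frame_torsion_eq0. intros c d. now apply Ht. }
  unfold intrinsic_torsion_vanishes.
  destruct (intrinsic_torsion_frame t) as (-> & -> & -> & ->).
  rewrite !H0 by lia. lra.
Qed.

Definition connection (k c : nat) : R :=
  sum4 (fun i => frame_connection A VA VB VC k i * hval i c).

(** Since [η^i(∂_c) = h i c], this says [dη + θ ∧ η = intrinsic_form] in the coframe. *)
Lemma torsion_connection a c d : (a < 4)%nat -> (c < d)%nat -> (d < 4)%nat ->
  torsion connection a c d =
  sum4 (fun i => sum4 (fun j => hval i c * hval j d *
    intrinsic_form (intrinsic_torsion1 A C VA VB VD) (intrinsic_torsion2 A C VA VB VC VD)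
      (intrinsic_torsion3 A C VA VB VC VD) (intrinsic_torsion4 A VA VB VC) a i j)).
Proof.
  intros Ha Hcd Hd.
  destruct a as [|[|[|[|a]]]]; try lia; destruct d as [|[|[|[|d]]]]; try lia;
    destruct c as [|[|[|c]]]; try lia;
    unfold intrinsic_torsion1, intrinsic_torsion2, intrinsic_torsion3, intrinsic_torsion4,
      intrinsic_form, torsion, connection, frame_connection, frame_comp, dhval, hval, sum4, g3basis;
    field.
Qed.

Lemma torsion_connection_eq0 a c d : (a < 4)%nat -> (c < d)%nat -> (d < 4)%nat ->
  intrinsic_torsion_vanishes A C VA VB VC VD -> torsion connection a c d = 0.
Proof.
  intros Ha Hcd Hd (H1 & H2 & H3 & H4).
  rewrite torsion_connection, H1, H2, H3, H4 by assumption.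
  apply sum4_eq0. intros i _. apply sum4_eq0. intros j _.
  rewrite intrinsic_form0. ring.
Qed.

End Pointwise.

Lemma pd_hmat (A B C D : pt -> R) c a d p :
  pd c (hmat A B C D a d) p =
  dhval (fun i => pd i A p) (fun i => pd i B p) (fun i => pd i C p) (fun i => pd i D p) c a d.
Proof.
  destruct a as [|[|[|[|a]]]]; destruct d as [|[|[|[|d]]]];
    first [reflexivity | apply pd_const].
Qed.

Lemma structure_equation_iff_torsion0 (A B C D : pt -> R) (t : nat -> nat -> pt -> R) p a c d :
  pd c (hmat A B C D a d) p - pd d (hmat A B C D a c) p =
    - sum4 (fun b => sum4 (fun k => t k c p * g3basis k a b) * hmat A B C D b d p
                     - sum4 (fun k => t k d p * g3basis k a b) * hmat A B C D b c p) <->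
  torsion (A p) (B p) (C p) (D p) (fun i => pd i A p) (fun i => pd i B p)
    (fun i => pd i C p) (fun i => pd i D p) (fun k e => t k e p) a c d = 0.
Proof.
  rewrite !pd_hmat. unfold torsion, hval, hmat. split; intro; lra.
Qed.

Ltac smooth_tac :=
  repeat first [ assumption | apply smooth_on_const | apply smooth_on_plus | apply smooth_on_minus
               | apply smooth_on_opp | apply smooth_on_mult | apply smooth_on_pow ].

Section SmoothWitness.

Variables (U : pt -> Prop) (A B C D : pt -> R).
Hypotheses (U_open : is_open U) (HA : smooth_on U A) (HB : smooth_on U B)
  (HC : smooth_on U C) (HD : smooth_on U D).

Lemma smooth_on_hmat a b : smooth_on U (hmat A B C D a b).
Proof.
  destruct a as [|[|[|[|a]]]]; destruct b as [|[|[|[|b]]]]; cbv beta iota delta [hmat]; smooth_tac.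
Qed.

Lemma smooth_on_Vf f j : smooth_on U f -> smooth_on U (Vf A B C D j f).
Proof.
  intro Hf.
  destruct j as [|[|[|j]]]; cbv beta iota delta [Vf];
    repeat first [ apply smooth_on_pd; [exact U_open | lia | assumption] | progress smooth_tac ].
Qed.

Lemma smooth_on_frame_connection (VA VB VC : nat -> pt -> R) k i :
  (forall j, smooth_on U (VA j)) -> (forall j, smooth_on U (VB j)) ->
  (forall j, smooth_on U (VC j)) ->
  smooth_on U (fun p => frame_connection (A p) (fun j => VA j p) (fun j => VB j p)
                          (fun j => VC j p) k i).
Proof.
  intros HVA HVB HVC.
  destruct k as [|[|[|[|k]]]]; destruct i as [|[|[|[|i]]]];
    cbv beta iota delta [frame_connection]; unfold Rdiv;
    repeat first [ apply HVA | apply HVB | apply HVC | progress smooth_tac ].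
Qed.

Lemma smooth_on_connection k c :
  smooth_on U (fun p => connection (A p) (B p) (C p) (D p)
                 (fun i => pd i A p) (fun i => pd i B p) (fun i => pd i C p) k c).
Proof.
  unfold connection. apply smooth_on_sum4. intro i.
  apply smooth_on_mult; [|apply smooth_on_hmat].
  apply (smooth_on_frame_connection (fun j => Vf A B C D j A) (fun j => Vf A B C D j B)
           (fun j => Vf A B C D j C)); intro j; apply smooth_on_Vf; assumption.
Qed.

End SmoothWitness.

Theorem theorem3 (U : pt -> Prop) (A B C D : pt -> R) :
  is_open U ->
  smooth_on U A -> smooth_on U B -> smooth_on U C -> smooth_on U D ->
  (torsion_free U (hmat A B C D) <->
   forall p, U p ->
     let V j f := Vf A B C D j f p in
     V 2%nat D - V 3%nat B - A p * V 2%nat B - C p * V 2%nat A + A p * V 3%nat A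
       + A p ^ 2 * V 2%nat A = 0 /\
     2 * V 1%nat D - V 2%nat C - 2 * A p * V 1%nat B - V 3%nat A + A p * V 2%nat A
       + 2 * A p ^ 2 * V 1%nat A - 2 * C p * V 1%nat A = 0 /\
     V 0%nat D - 2 * V 1%nat C + 3 * V 1%nat B - A p * V 0%nat B - 2 * V 2%nat A
       - A p * V 1%nat A - C p * V 0%nat A + A p ^ 2 * V 0%nat A = 0 /\
     V 0%nat C - 2 * V 0%nat B + V 1%nat A + A p * V 0%nat A = 0).
Proof.
  intros HU HA HB HC HD. split.
  - intros [t [_ Ht]] p Hp.
    apply (intrinsic_torsion_vanishes_of_torsion0 (A p) (B p) (C p) (D p)
             (fun i => pd i A p) (fun i => pd i B p) (fun i => pd i C p) (fun i => pd i D p)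
             (fun k c => t k c p)).
    intros a c d Ha Hcd Hd. apply structure_equation_iff_torsion0.
    exact (Ht p Hp a c d Ha Hcd Hd).
  - intro Hint.
    set (t k c p := connection (A p) (B p) (C p) (D p)
                      (fun i => pd i A p) (fun i => pd i B p) (fun i => pd i C p) k c).
    exists t. split.
    + intros k c _ _. now apply smooth_on_connection.
    + intros theta p Hp a c d Ha Hcd Hd. apply (structure_equation_iff_torsion0 A B C D t).
      apply torsion_connection_eq0; [assumption.. | exact (Hint p Hp)].
Qed.
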